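(* Let $P$ (principals) and $V$ (values) be sets, $o\in P$ a distinguished principal, and $R\subseteq P\times V\times P\times K$ a set of communication rules, where $K=2^{P\times V}$, such that (i) $R$ contains no self-rules, i.e. no rule of the form $(p,v,p,k)$, and (ii) every rule $(p_b,v,p_a,k_a)\in R$ satisfies $k_a\subseteq\{p_a\}\times V$. Let $k_0\in K$, put $V_0=\mathrm{Knowledge}(k_0)$, and assume $(P\setminus\{o\})\times V_0\subseteq k_0$. For $n\ge 0$ let $k_n=f_R^n(k_0)$. Then for every $n\ge 0$ there exists a unique set $X_n\subseteq V$ with $$k_n=\big[(P\setminus\{o\})\times V_0\big]\cup\big[\{o\}\times X_n\big],$$ and this set satisfies $X_n=g^n_{R,k_0}(X_0)$, where $X_0=\{v:(o,v)\in k_0\}$.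
   Context: A state of knowledge is a subset $k\subseteq P\times V$; $K=2^{P\times V}$. For a state $k$, $\mathrm{Knowledge}(k)=\{v:(p,v)\in k\text{ for some }p\in P\}$. For a set of rules $R\subseteq P\times V\times P\times K$, define $f_R:K\to K$ by $$f_R(k)=k\cup\{(p_a,v): (p_b,v)\in k,\ k_a\subseteq k,\ (p_b,v,p_a,k_a)\in R\text{ for some }p_b\in P,\ k_a\in K\}.$$ (A rule $(p_b,v,p_a,k_a)$ means: $p_b$ tells $v$ to $p_a$ if $p_a$'s knowledge includes $k_a$.) Define $R(k_0)=\{(p_b,x,p_a,k_a)\in R: \{x\}\cup\{v:(p_a,v)\in k_a\}\subseteq \mathrm{Knowledge}(k_0)\}$. For $X\subseteq V$ and $x\in V$, write $X\to x$ if there is a rule $(p,x,o,k_\sigma)\in R(k_0)$ with $p\in P\setminus\{o\}$ and $X=\{v:(o,v)\in k_\sigma\}$. Define $g_{R,k_0}:2^V\to 2^V$ by $g_{R,k_0}(X)=X\cup\{x: X_\sigma\to x\text{ for some }X_\sigma\subseteq X\}$, and $g^n_{R,k_0}$ its $n$-fold iterate ($g^0$ the identity). *)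

From HB Require Import structures.
From mathcomp Require Import all_boot.
From mathcomp Require Import boolp classical_sets.
Set Implicit Arguments. Unset Strict Implicit. Unset Printing Implicit Defensive.
Local Open Scope classical_set_scope.

Definition state (P V : Type) := set (P * V).

Definition Knowledge (P V : Type) (k : state P V) : set V :=
  [set v | exists p, k (p, v)].

Definition rule (P V : Type) := (P * V * P * state P V)%type.

Definition fR (P V : Type) (R : set (rule P V)) (k : state P V) : state P V :=
  k `|` [set x | exists pb ka, k (pb, x.2) /\ ka `<=` k /\ R (pb, x.2, x.1, ka)].

(* R(k0) = { (p_b,x,p_a,k_a) ∈ R : {x} ∪ {v : (p_a,v) ∈ k_a} ⊆ Knowledge(k0) }. *)
Definition Rk0 (P V : Type) (R : set (rule P V)) (k0 : state P V) : set (rule P V) :=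
  [set r | R r /\
     ([set r.1.1.2] `|` [set v | r.2 (r.1.2, v)]) `<=` Knowledge k0].

Definition arrow (P V : Type) (o : P) (R : set (rule P V)) (k0 : state P V)
  (X : set V) (x : V) : Prop :=
  exists (p : P) (ks : state P V),
    Rk0 R k0 (p, x, o, ks) /\ p <> o /\ X = [set v | ks (o, v)].

Definition gR (P V : Type) (o : P) (R : set (rule P V)) (k0 : state P V)
  (X : set V) : set V :=
  X `|` [set x | exists Xs, Xs `<=` X /\ arrow o R k0 Xs x].

From mathcomp Require Import all_boot.
From mathcomp Require Import boolp classical_sets.
Local Open Scope classical_set_scope.
Set Implicit Arguments. Unset Strict Implicit. Unset Printing Implicit Defensive.

(* Every reachable state has the shape [(P \ {o}) x V0 ∪ {o} x X]: the other
   principals already know all of V0, so the only growth is in what [o]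
   learns.  On such states [f_R] acts exactly as [g_{R,k0}] does on [X]: a rule
   telling [o] a value fires iff its teller knows the value (automatic, since
   by (i) the teller is not [o], and the value lies in V0) and [o] already
   knows the set required by the rule, which by (ii) is a set of values held
   by [o]. *)

Definition split_state (P V : Type) (o : P) (V0 X : set V) : state P V :=
  [set x | x.1 <> o /\ V0 x.2] `|` [set x | x.1 = o /\ X x.2].

Lemma split_state_inj (P V : Type) (o : P) (V0 X Y : set V) :
  split_state o V0 X = split_state o V0 Y -> X = Y.
Proof.
have sub Z W : split_state o V0 Z = split_state o V0 W -> Z `<=` W.
  by move=> e v Zv; have [[]|[]] : split_state o V0 W (o, v) by rewrite -e; right.
by move=> e; apply/seteqP; split; apply: sub.
Qed.

Lemma split_state_sub (P V : Type) (o : P) (V0 X : set V) (p : P) (v : V) :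
  X `<=` V0 -> split_state o V0 X (p, v) -> V0 v.
Proof. by move=> XV0 [[_ ?]|[_ /XV0 ?]]. Qed.

Lemma split_state_init (P V : Type) (o : P) (k0 : state P V) :
  [set x | x.1 <> o /\ Knowledge k0 x.2] `<=` k0 ->
  k0 = split_state o (Knowledge k0) [set v | k0 (o, v)].
Proof.
move=> others_k0; apply/seteqP; split => -[p v].
  move=> k0pv; have [ep|po] := pselect (p = o); first by right; rewrite -ep.
  by left; split => //; exists p.
by case=> [/others_k0 //|[/= -> //]].
Qed.

Lemma gR_sub_Knowledge (P V : Type) (o : P) (R : set (rule P V))
    (k0 : state P V) (X : set V) :
  X `<=` Knowledge k0 -> gR o R k0 X `<=` Knowledge k0.
Proof.
by move=> XV0 v [/XV0 //|[_ [_ [p [ks [[_ Rk0V] _]]]]]]; apply: Rk0V; left.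
Qed.

Section SplitDynamics.

Variables (P V : Type) (o : P) (R : set (rule P V)) (k0 : state P V).
Hypothesis no_self_rule : forall p v ka, ~ R (p, v, p, ka).
Hypothesis rule_own_knowledge :
  forall pb v pa ka, R (pb, v, pa, ka) -> ka `<=` [set x | x.1 = pa].

Let V0 := Knowledge k0.

Lemma fR_split_state (X : set V) : X `<=` V0 ->
  fR R (split_state o V0 X) = split_state o V0 (gR o R k0 X).
Proof.
move=> XV0; set k := split_state o V0 X.
have kV0 p v : k (p, v) -> V0 v by apply: split_state_sub.
apply/seteqP; split => -[p v].
  case=> [[[po V0v]|[/= -> Xv]]|[pb [ka [kpbv [ka_k Rr]]]]] /=.
  - by left.
  - by right; split => //; left.
  move: kpbv ka_k Rr => /= kpbv ka_k Rr.
  have [ep|po] := pselect (p = o); last by left; split => //; apply: kV0 kpbv.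
  subst p; right; split => //; right; exists [set w | ka (o, w)]; split.
    by move=> w /ka_k [[/= //]|[_ //]].
  exists pb, ka; split; last split => //.
    split => // w [->|/ka_k]; [exact: kV0 kpbv | exact: kV0].
  by move=> pbo; move: Rr; rewrite pbo; apply: no_self_rule.
case=> [kpv|[/= -> [Xv|[Xs [XsX [q [ks [[Rr Rk0V] [qo eXs]]]]]]]]].
- by left; left.
- by left; right.
right; exists q, ks; split; first by left; split => //; apply: Rk0V; left.
split => // -[q' w] ksw; right.
have /= q'o := rule_own_knowledge Rr ksw; split => //.
by apply: XsX; rewrite eXs /= -q'o.
Qed.

Lemma iter_fR_split_state (n : nat) :
  [set x | x.1 <> o /\ V0 x.2] `<=` k0 ->
  iter n (fR R) k0 = split_state o V0 (iter n (gR o R k0) [set v | k0 (o, v)])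
  /\ iter n (gR o R k0) [set v | k0 (o, v)] `<=` V0.
Proof.
move=> others_k0; elim: n => [|n [IH XV0]] /=.
  by split; [exact: split_state_init | move=> v k0ov; exists o].
by rewrite IH fR_split_state //; split => //; apply: gR_sub_Knowledge.
Qed.

End SplitDynamics.

Theorem lemma1 (P V : Type) (o : P) (R : set (rule P V)) (k0 : state P V) :
  (forall (p : P) (v : V) (ka : state P V), ~ R (p, v, p, ka)) ->
  (forall (pb : P) (v : V) (pa : P) (ka : state P V),
     R (pb, v, pa, ka) -> ka `<=` [set x | x.1 = pa]) ->
  [set x | x.1 <> o /\ Knowledge k0 x.2] `<=` k0 ->
  forall n : nat,
    (exists! X : set V,
        iter n (fR R) k0 =
        [set x | x.1 <> o /\ Knowledge k0 x.2] `|` [set x | x.1 = o /\ X x.2]) /\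
    (forall X : set V,
        iter n (fR R) k0 =
        [set x | x.1 <> o /\ Knowledge k0 x.2] `|` [set x | x.1 = o /\ X x.2] ->
        X = iter n (gR o R k0) [set v | k0 (o, v)]).
Proof.
move=> no_self_rule rule_own_knowledge others_k0 n.
have [kn _] := iter_fR_split_state no_self_rule rule_own_knowledge n others_k0.
have kn_X X : iter n (fR R) k0 = split_state o (Knowledge k0) X ->
    X = iter n (gR o R k0) [set v | k0 (o, v)].
  by move=> e; apply: (@split_state_inj _ _ o (Knowledge k0)); rewrite -e kn.
split; last exact: kn_X.
by exists (iter n (gR o R k0) [set v | k0 (o, v)]); split => // Y /kn_X.
Qed.
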